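(* For $t\in\{0,\delta,\dots,T\}$ let $v^t$ be the value function at time $t$ and $v_h^t$ its approximation given by the ideal max-plus finite element method. Then \[ \|v_h^T-v^T\|_\infty\leq\|P_{\mathcal W_h}(v^0)-v^0\|_\infty+\sum_{t\in\{\delta,2\delta,\dots,T\}}\|P_{\mathcal W_h}(P^{-\mathcal Z_h}(v^t))-v^t\|_\infty. \]
   Context: Optimal control setting: $X\subseteq\mathbb{R}^n$, $U\subseteq\mathbb{R}^m$, $\ell:X\times U\to\mathbb R$, $f:X\times U\to\mathbb{R}^n$, $T>0$, $\phi:X\to\mathbb{R}\cup\{-\infty\}$. For $t\ge0$ and $g:X\to\overline{\mathbb R}$, $S^tg(x)=\sup\{\int_0^t\ell(\mathbf x(s),\mathbf u(s))ds+g(\mathbf x(t))\}$ over measurable $\mathbf u:[0,t]\to U$ and absolutely continuous $\mathbf x:[0,t]\to X$ with $\dot{\mathbf x}=f(\mathbf x,\mathbf u)$ a.e. and $\mathbf x(0)=x$; value function $v^t=S^t\phi$. Arithmetic in $\overline{\mathbb R}=\mathbb{R}\cup\{\pm\infty\}$ with $-\infty$ absorbing for $+$; $a\backslash b=\max\{\lambda\in\overline{\mathbb{R}}:a+\lambda\leq b\}$. $\langle u,v\rangle=\sup_{x\in X}(u(x)+v(x))$. Finite elements $w_1,\dots,w_p$ and test functions $z_1,\dots,z_q$, functions $X\to\mathbb{R}\cup\{-\infty\}$. $W_h\lambda=\sup_i(w_i+\lambda_i)$; $(W_h\backslash g)_i=\inf_{x\in X}(w_i(x)\backslash g(x))$;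 $P_{\mathcal W_h}g=W_h(W_h\backslash g)$; $P^{-\mathcal Z_h}g(x)=\min_j\big(z_j(x)\backslash\langle z_j,g\rangle\big)$. For a matrix $A$: $(A\lambda)_j=\max_k(A_{jk}+\lambda_k)$, $(A\backslash\mu)_i=\min_jA_{ji}\backslash\mu_j$. Ideal max-plus finite element method: $N\geq1$, $\delta=T/N$, $(M_h)_{ji}=\langle z_j,w_i\rangle$, $(K_h)_{ji}=\langle z_j,S^\delta w_i\rangle$, $\lambda^0=W_h\backslash\phi$, $\lambda^{t+\delta}=M_h\backslash(K_h\lambda^t)$ for $t=0,\dots,T-\delta$, $v_h^t=W_h\lambda^t$. For $u,v:X\to\overline{\mathbb R}$, $\|u-v\|_\infty=\inf\{\lambda\geq0: v-\lambda\leq u\leq v+\lambda\}$ (equal to $\sup_{x}|u(x)-v(x)|$ when $u-v$ is finite-valued, $+\infty$ if no such $\lambda$). *)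

From HB Require Import structures.
From mathcomp Require Import all_boot all_order all_algebra.
From mathcomp Require Import all_classical all_reals all_analysis.
Set Implicit Arguments. Unset Strict Implicit. Unset Printing Implicit Defensive.
Import Order.TTheory GRing.Theory Num.Theory.
Import numFieldNormedType.Exports.
Local Open Scope classical_set_scope.
Local Open Scope ring_scope.
Local Open Scope ereal_scope.

Section MaxPlus.
Variable R : realType.

Definition eres (a b : \bar R) : \bar R := ereal_sup [set l | a + l <= b].

Definition abs_cont_on (n : nat) (a b : R) (x : R -> 'rV[R]_n) : Prop :=
  forall e : R, (0 < e)%R -> exists2 d : R, (0 < d)%R &
    forall (K : nat) (al bl : nat -> R),
      (forall k, (k < K)%N -> (a <= al k)%R /\ (al k <= bl k)%R /\ (bl k <= b)%R) ->
      (forall i j, (i < K)%N -> (j < K)%N -> i <> j ->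
          (bl i <= al j)%R \/ (bl j <= al i)%R) ->
      (\sum_(k < K) (bl k - al k) < d)%R ->
      (\sum_(k < K) `| x (bl k) - x (al k) | < e)%R.

Definition admissible (n m : nat) (X : set 'rV[R]_n) (U : set 'rV[R]_m)
    (f : 'rV[R]_n -> 'rV[R]_m -> 'rV[R]_n) (t : R) (x0 : 'rV[R]_n)
    (u : R -> 'rV[R]_m) (x : R -> 'rV[R]_n) : Prop :=
  (forall s, `[0%R, t]%classic s -> U (u s)) /\
  (forall i : 'I_m, measurable_fun `[0%R, t] (fun s => u s ord0 i)) /\
  (forall s, `[0%R, t]%classic s -> X (x s)) /\
  abs_cont_on 0%R t x /\
  {ae (@lebesgue_measure R), forall s, `[0%R, t]%classic s ->
      is_derive s 1%R x (f (x s) (u s))} /\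
  x 0%R = x0.

Definition Sop (n m : nat) (X : set 'rV[R]_n) (U : set 'rV[R]_m)
    (l : 'rV[R]_n -> 'rV[R]_m -> R) (f : 'rV[R]_n -> 'rV[R]_m -> 'rV[R]_n)
    (t : R) (g : 'rV[R]_n -> \bar R) (x0 : 'rV[R]_n) : \bar R :=
  ereal_sup [set (\int[@lebesgue_measure R]_(s in `[0%R, t]) (l (uxs.2 s) (uxs.1 s))%:E)
                   + g (uxs.2 t)
            | uxs in [set uxs : (R -> 'rV[R]_m) * (R -> 'rV[R]_n) |
                       admissible X U f t x0 uxs.1 uxs.2] ].

Definition mp_dot (n : nat) (X : set 'rV[R]_n) (u v : 'rV[R]_n -> \bar R) : \bar R :=
  ereal_sup [set u x + v x | x in X].

Definition sup_dist (n : nat) (X : set 'rV[R]_n) (u v : 'rV[R]_n -> \bar R) : \bar R :=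
  ereal_inf [set l%:E | l in [set l : R | (0 <= l)%R /\
     forall x, X x -> v x - l%:E <= u x /\ u x <= v x + l%:E]].

Definition Wmap (n p : nat) (w : 'I_p -> 'rV[R]_n -> \bar R) (lam : 'I_p -> \bar R)
  : 'rV[R]_n -> \bar R := fun x => \big[maxe/-oo]_(i < p) (w i x + lam i).

Definition Wres (n p : nat) (X : set 'rV[R]_n) (w : 'I_p -> 'rV[R]_n -> \bar R)
  (g : 'rV[R]_n -> \bar R) : 'I_p -> \bar R :=
  fun i => ereal_inf [set eres (w i x) (g x) | x in X].

Definition PW (n p : nat) (X : set 'rV[R]_n) (w : 'I_p -> 'rV[R]_n -> \bar R)
  (g : 'rV[R]_n -> \bar R) : 'rV[R]_n -> \bar R := Wmap w (Wres X w g).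

Definition PmZ (n q : nat) (X : set 'rV[R]_n) (z : 'I_q -> 'rV[R]_n -> \bar R)
  (g : 'rV[R]_n -> \bar R) : 'rV[R]_n -> \bar R :=
  fun x => \big[mine/+oo]_(j < q) eres (z j x) (mp_dot X (z j) g).

Definition mp_mul (q p : nat) (A : 'I_q -> 'I_p -> \bar R) (lam : 'I_p -> \bar R)
  : 'I_q -> \bar R := fun j => \big[maxe/-oo]_(k < p) (A j k + lam k).

Definition mp_res (q p : nat) (A : 'I_q -> 'I_p -> \bar R) (mu : 'I_q -> \bar R)
  : 'I_p -> \bar R := fun i => \big[mine/+oo]_(j < q) eres (A j i) (mu j).

Fixpoint mpfem_lambda (n m p q : nat) (X : set 'rV[R]_n) (U : set 'rV[R]_m)
    (l : 'rV[R]_n -> 'rV[R]_m -> R) (f : 'rV[R]_n -> 'rV[R]_m -> 'rV[R]_n)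
    (delta : R) (phi : 'rV[R]_n -> \bar R)
    (w : 'I_p -> 'rV[R]_n -> \bar R) (z : 'I_q -> 'rV[R]_n -> \bar R)
    (k : nat) : 'I_p -> \bar R :=
  match k with
  | 0%N => Wres X w phi
  | k'.+1 =>
      let Mh := fun j i => mp_dot X (z j) (w i) in
      let Kh := fun j i => mp_dot X (z j) (Sop X U l f delta (w i)) in
      mp_res Mh (mp_mul Kh (mpfem_lambda X U l f delta phi w z k'))
  end.

End MaxPlus.

(* Write S for the Bellman operator S^delta and P for P_W o P^{-Z}.  The
   semigroup property S^a (S^b g) = S^(a+b) g gives v^{t+delta} = S v^t, and
   since residuation turns max-plus linear combinations into residuated matrix
   products, the ideal method is exactly v_h^{t+delta} = P (S v_h^t).  Both S
   and P are monotone and commute with adding constants, hence are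
   nonexpansive for the sup-norm, so the triangle inequality through
   P (S v^t) = P v^{t+delta} gives
     |v_h^{t+delta} - v^{t+delta}| <= |v_h^t - v^t| + |P v^{t+delta} - v^{t+delta}|,
   and the claim follows by summing over the time steps. *)

From HB Require Import structures.
From mathcomp Require Import all_boot all_order all_algebra.
From mathcomp Require Import all_classical all_reals all_analysis.
From mathcomp Require Import lra.
Import Order.TTheory GRing.Theory Num.Theory HBNNSimple.
Set Implicit Arguments. Unset Strict Implicit. Unset Printing Implicit Defensive.
Local Open Scope classical_set_scope.
Local Open Scope ring_scope.
Local Open Scope ereal_scope.

Section residuation.
Context {R : realType}.
Implicit Types (a b c l : \bar R) (S : set (\bar R)).

Lemma adde_ereal_sup_le a S c :
  (forall s, S s -> a + s <= c) -> a + ereal_sup S <= c.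
Proof.
case: a => [r| |] H; last by rewrite addNye leNye.
- case: c H => [c| |] H; last 2 first.
  + by rewrite leey.
  + suff -> : ereal_sup S = -oo by [].
    apply/ereal_sup_ninfty => s Ss; have := H s Ss.
    by case: s {Ss} => [s| |] //=; rewrite leeNy_eq.
  + have : ereal_sup S <= (c - r)%:E.
      apply: ge_ereal_sup => s Ss; have := H s Ss.
      case: s {Ss} => [s| |] //; rewrite ?leNye // => hs.
      by rewrite lee_fin; rewrite -EFinD lee_fin in hs; lra.
    case: (ereal_sup S) => [u| |] //; last by move=> _; rewrite addeNy leNye.
    by rewrite -EFinD !lee_fin => ?; lra.
- have [->|] := eqVneq (ereal_sup S) -oo; first by rewrite addeNy leNye.
  rewrite -ltNye => /ereal_sup_gt [y Sy yNy].
  have := H y Sy; rewrite addye ?gt_eqF //.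
  by case: c {H} => [c| |] //= _; rewrite leey.
Qed.

Lemma ereal_sup_adde_le a S c :
  (forall s, S s -> s + a <= c) -> ereal_sup S + a <= c.
Proof. by move=> H; rewrite addeC; apply: adde_ereal_sup_le => s /H; rewrite addeC. Qed.

Lemma adde_bigmax_le a p (F : 'I_p -> \bar R) c :
  (forall i, a + F i <= c) -> a + \big[maxe/-oo]_(i < p) F i <= c.
Proof.
move=> H; elim/big_ind: _ => //; first by rewrite addeNy leNye.
by move=> x y hx hy; rewrite /Order.max; case: ifP.
Qed.

Lemma adde_eres_le a b : a + eres a b <= b.
Proof. exact: adde_ereal_sup_le. Qed.

Lemma le_eresP a b l : l <= eres a b <-> a + l <= b.
Proof.
split=> [H|]; last exact: ereal_sup_ubound.
by apply: le_trans (adde_eres_le a b); exact: leeD2l.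
Qed.

Lemma eres_le_addr a b b' (c : R) :
  b <= b' + c%:E -> eres a b <= eres a b' + c%:E.
Proof.
move=> h; rewrite -leeBlDr //; apply/le_eresP.
by rewrite addeA leeBlDr //; exact: le_trans (adde_eres_le a b) h.
Qed.

End residuation.

Lemma ereal_sup_adde_bigmax {R : realType} (T : Type) (A : set T) (F : T -> \bar R)
    p (G : 'I_p -> T -> \bar R) (lam : 'I_p -> \bar R) :
  ereal_sup [set F s + \big[maxe/-oo]_(k < p) (G k s + lam k) | s in A] =
  \big[maxe/-oo]_(k < p) (ereal_sup [set F s + G k s | s in A] + lam k).
Proof.
apply/le_anti/andP; split.
- apply: ge_ereal_sup => _ [s As <-]; apply: adde_bigmax_le => k.
  apply: le_trans (le_bigmax _ (fun k => ereal_sup [set F s + G k s | s in A] + lam k) k).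
  by rewrite addeA; apply: leeD2r; apply: ereal_sup_ubound; exists s.
- apply: bigmax_le => [|k _]; first exact: leNye.
  apply: ereal_sup_adde_le => _ [s As <-].
  rewrite -addeA; apply: le_trans (ereal_sup_ubound _); last by exists s.
  by rewrite leeD2l // (le_bigmax _ (fun k => G k s + lam k)).
Qed.

Section sup_dist.
Context {R : realType} {n : nat} (X : set 'rV[R]_n).
Implicit Types (u v : 'rV[R]_n -> \bar R).

Definition le_upto (c : R) u v := forall x, X x -> u x <= v x + c%:E.

Definition close (c : R) u v := le_upto c u v /\ le_upto c v u.

Definition nonexpansive (F : ('rV[R]_n -> \bar R) -> 'rV[R]_n -> \bar R) :=
  forall c u v, le_upto c u v -> le_upto c (F u) (F v).

Lemma sup_dist_ge0 u v : 0 <= sup_dist X u v.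
Proof. by apply: le_ereal_inf_tmp => _ [l [l0 _] <-]; rewrite lee_fin. Qed.

Lemma sup_dist_le c u v : (0 <= c)%R -> close c u v -> sup_dist X u v <= c%:E.
Proof.
move=> c0 [uv vu]; apply: ereal_inf_lbound; exists c => //; split => // x Xx.
by rewrite leeBlDr // uv // vu.
Qed.

Lemma sup_dist_approx u v (e : R) : (0 < e)%R -> sup_dist X u v \is a fin_num ->
  exists c, [/\ (0 <= c)%R, close c u v & c%:E < sup_dist X u v + e%:E].
Proof.
move=> e0 fin; have [_ [c [c0 hc] <-] lt_c] := lb_ereal_inf_adherent e0 fin.
by exists c; split => //; split => x /hc[vu uv] //; rewrite -leeBlDr.
Qed.

Lemma close_trans c1 c2 u1 u2 u3 :
  close c1 u1 u2 -> close c2 u2 u3 -> close (c1 + c2) u1 u3.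
Proof.
move=> [h12 h21] [h23 h32]; rewrite /close /le_upto EFinD; split => x Xx.
- apply: le_trans (h12 x Xx) _; rewrite (addeC c1%:E) addeA.
  by apply: leeD2r; exact: h23.
- by apply: le_trans (h32 x Xx) _; rewrite addeA; apply: leeD2r; exact: h21.
Qed.

Lemma sup_dist_fin_num u v : sup_dist X u v != +oo -> sup_dist X u v \is a fin_num.
Proof. by move=> h; rewrite ge0_fin_numE ?sup_dist_ge0 // ltey. Qed.

Lemma sup_dist_triangle u1 u2 u3 :
  sup_dist X u1 u3 <= sup_dist X u1 u2 + sup_dist X u2 u3.
Proof.
have ge0Noo u v : sup_dist X u v != -oo.
  by rewrite gt_eqF // (lt_le_trans _ (sup_dist_ge0 _ _)).
have [->|h12] := eqVneq (sup_dist X u1 u2) +oo; first by rewrite addye ?leey.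
have [->|h23] := eqVneq (sup_dist X u2 u3) +oo; first by rewrite addey ?leey.
apply/lee_addgt0Pr => e e0; have e20 : (0 < e / 2)%R by rewrite divr_gt0.
have [c1 [c10 hc1 lt1]] := sup_dist_approx e20 (sup_dist_fin_num h12).
have [c2 [c20 hc2 lt2]] := sup_dist_approx e20 (sup_dist_fin_num h23).
apply: le_trans (sup_dist_le (addr_ge0 c10 c20) (close_trans hc1 hc2)) _.
by rewrite [in Y in _ <= Y](splitr e) !EFinD addeACA; apply: leeD; exact: ltW.
Qed.

Lemma sup_dist_nonexpansive F u v :
  nonexpansive F -> sup_dist X (F u) (F v) <= sup_dist X u v.
Proof.
move=> neF; have [->|hne] := eqVneq (sup_dist X u v) +oo; first exact: leey.
apply/lee_addgt0Pr => e e0.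
have [c [c0 [uv vu] lt_c]] := sup_dist_approx e0 (sup_dist_fin_num hne).
by apply: le_trans (ltW lt_c); apply: sup_dist_le => //; split; exact: neF.
Qed.

Lemma eq_sup_dist u u' v v' : {in X, u =1 u'} -> {in X, v =1 v'} ->
  sup_dist X u v = sup_dist X u' v'.
Proof.
move=> uu' vv'; rewrite /sup_dist; congr ereal_inf; apply/seteqP.
by split=> _ [c [c0 hc] <-]; exists c => //; split => // x Xx;
  move: (hc x Xx); rewrite ?uu' ?vv' ?inE.
Qed.

End sup_dist.

Section maxplus_projections.
Context {R : realType} {n p q : nat} (X : set 'rV[R]_n).
Variables (w : 'I_p -> 'rV[R]_n -> \bar R) (z : 'I_q -> 'rV[R]_n -> \bar R).

Lemma Wres_le_upto c u v : le_upto X c u v ->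
  forall i, Wres X w u i <= Wres X w v i + c%:E.
Proof.
move=> uv i; rewrite -leeBlDr //; apply: le_ereal_inf_tmp => _ [x Xx <-].
apply/le_eresP; rewrite addeA leeBlDr //; apply: le_trans (uv x Xx).
by apply/le_eresP; apply: ereal_inf_lbound; exists x.
Qed.

Lemma Wmap_le_upto c (lam mu : 'I_p -> \bar R) :
  (forall i, lam i <= mu i + c%:E) -> forall x, Wmap w lam x <= Wmap w mu x + c%:E.
Proof.
move=> lam_mu x; apply: bigmax_le => [|i _]; first exact: leNye.
apply: le_trans (leeD2l _ (lam_mu i)) _; rewrite addeA; apply: leeD2r.
exact: (le_bigmax _ (fun i => w i x + mu i)).
Qed.

Lemma PW_nonexpansive : nonexpansive X (PW X w).
Proof. by move=> c u v uv x _; apply: Wmap_le_upto; exact: Wres_le_upto. Qed.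

Lemma mp_dot_le_upto c y u v : le_upto X c u v ->
  mp_dot X y u <= mp_dot X y v + c%:E.
Proof.
move=> uv; apply: ge_ereal_sup => _ [x Xx <-].
apply: le_trans (leeD2l _ (uv x Xx)) _; rewrite addeA; apply: leeD2r.
by apply: ereal_sup_ubound; exists x.
Qed.

Lemma PmZ_nonexpansive : nonexpansive X (PmZ X z).
Proof.
move=> c u v uv x _; rewrite -leeBlDr //; apply: le_bigmin => [|j _]; first exact: leey.
rewrite leeBlDr //.
apply: le_trans (bigmin_le +oo j (fun j => eres (z j x) (mp_dot X (z j) u))) _.
by apply: eres_le_addr; exact: mp_dot_le_upto.
Qed.

Lemma PW_PmZ_nonexpansive : nonexpansive X (fun g => PW X w (PmZ X z g)).
Proof. by move=> c u v /PmZ_nonexpansive; exact: PW_nonexpansive. Qed.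

Lemma eq_PW u v : {in X, u =1 v} -> PW X w u = PW X w v.
Proof.
move=> uv; rewrite /PW /Wres; congr (Wmap w _); apply/funext => i.
congr ereal_inf; apply/seteqP.
by split => _ [x Xx <-]; exists x; rewrite // uv // inE.
Qed.

Lemma Wres_PmZ g : Wres X w (PmZ X z g) =
  mp_res (fun j i => mp_dot X (z j) (w i)) (fun j => mp_dot X (z j) g).
Proof.
apply/funext => i; apply/le_anti/andP; split.
- apply: le_bigmin => [|j _]; first exact: leey.
  apply/le_eresP; apply: ereal_sup_adde_le => _ [x Xx <-].
  rewrite -addeA; apply/le_eresP.
  apply: le_trans _ (bigmin_le +oo j (fun j => eres (z j x) (mp_dot X (z j) g))).
  by apply/le_eresP; apply: ereal_inf_lbound; exists x.
- apply: le_ereal_inf_tmp => _ [x Xx <-]; apply/le_eresP.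
  apply: le_bigmin => [|j _]; first exact: leey.
  apply/le_eresP; rewrite addeA.
  have /le_eresP := bigmin_le +oo j
    (fun j => eres (mp_dot X (z j) (w i)) (mp_dot X (z j) g)).
  apply: le_trans; apply: leeD2r.
  by apply: ereal_sup_ubound; exists x.
Qed.

Lemma mp_dot_bigmax j (h : 'I_p -> 'rV[R]_n -> \bar R) (lam : 'I_p -> \bar R) :
  mp_dot X (z j) (fun x => \big[maxe/-oo]_(k < p) (h k x + lam k)) =
  \big[maxe/-oo]_(k < p) (mp_dot X (z j) (h k) + lam k).
Proof. exact: ereal_sup_adde_bigmax. Qed.

End maxplus_projections.

Section value_operator.
Context {R : realType} {n m : nat} (X : set 'rV[R]_n) (U : set 'rV[R]_m).
Variables (l : 'rV[R]_n -> 'rV[R]_m -> R) (f : 'rV[R]_n -> 'rV[R]_m -> 'rV[R]_n).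
Local Notation S := (Sop X U l f).

Lemma Sop_nonexpansive t : (0 <= t)%R -> nonexpansive X (S t).
Proof.
move=> t0 c g g' gg' x0 _; apply: ge_ereal_sup => _ [ux adm <-].
have Xxt : X (ux.2 t).
  by case: adm => _ [_ [Xx _]]; apply: Xx; rewrite /= in_itv /= t0 lexx.
apply: le_trans (leeD2l _ (gg' _ Xxt)) _; rewrite addeA; apply: leeD2r.
by apply: ereal_sup_ubound; exists ux.
Qed.

Lemma Sop_no_control t g x0 : (0 <= t)%R -> U = set0 -> S t g x0 = -oo.
Proof.
move=> t0 U0; apply/ereal_sup_ninfty => _ [ux [Uu _] <-].
have : `[0%R, t]%classic 0%R by rewrite /= in_itv /= lexx t0.
by move/Uu; rewrite U0.
Qed.

Lemma Sop_Wmap p (w : 'I_p -> 'rV[R]_n -> \bar R) t (lam : 'I_p -> \bar R) :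
  S t (Wmap w lam) = fun x0 => \big[maxe/-oo]_(k < p) (S t (w k) x0 + lam k).
Proof. by apply/funext => x0; rewrite /Sop /Wmap ereal_sup_adde_bigmax. Qed.

Lemma mpfem_lambda_succ p q (w : 'I_p -> 'rV[R]_n -> \bar R)
    (z : 'I_q -> 'rV[R]_n -> \bar R) delta phi k :
  Wmap w (mpfem_lambda X U l f delta phi w z k.+1) =
  PW X w (PmZ X z (S delta (Wmap w (mpfem_lambda X U l f delta phi w z k)))).
Proof.
rewrite /PW Wres_PmZ /=; congr (Wmap w (mp_res _ _)).
by apply/funext => j; rewrite Sop_Wmap mp_dot_bigmax.
Qed.

End value_operator.


Section lebesgue_translation.
Context {R : realType}.
Local Notation mu := (@lebesgue_measure R).
Local Notation mT := (measurableTypeR R).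

Lemma measurable_fun_addr (D : set mT) (c : R) :
  measurable_fun D (fun s : mT => s + c : mT)%R.
Proof. by apply: measurable_realfun.measurable_funD => //; exact: measurable_id. Qed.

Lemma lebesgue_measure_shift (c : R) (A : set R) :
  measurable A -> mu [set x | A (x + c)%R] = mu A.
Proof.
move=> mA; pose nu := measure_function_pushforward__canonical__measure_function_Measure
  mu (measurable_fun_addr (D:=setT) c).
suff /(_ A mA) -> : forall A, measurable A -> mu A = nu A by [].
apply: lebesgue_measure_unique => _ [[a b] _ <-].
rewrite /nu /= /pushforward.
have -> : (fun x => x + c)%R @^-1` `]a, b]%classic = `](a - c)%R, (b - c)%R]%classic.
  by apply/seteqP; split => x /=; rewrite !in_itv /= ltrBlDr lerBrDr.
by rewrite !lebesgue_measure_itv /= !lte_fin ltrD2r -!EFinD opprB addrA subrK.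
Qed.

End lebesgue_translation.

Section integral_without_measurability.
Context {R : realType}.
Local Notation mu := (@lebesgue_measure R).
Local Notation mT := (measurableTypeR R).
Implicit Types (G F : R -> \bar R) (A B D : set R).

(* The running cost s |-> l (x s) (u s) of an admissible pair need not be
   measurable, so the library's additivity lemmas do not apply; we argue on the
   definition of the integral as a supremum over nonnegative simple functions. *)
Definition sup_sintegral G := ereal_sup [set sintegral mu h |
  h in [set h : {nnsfun mT >-> R} | forall x, (h x)%:E <= G x]].

Lemma ge0_integral_sup_sintegral D G : (forall x, D x -> 0 <= G x) ->
  \int[mu]_(x in D) G x = sup_sintegral (G \_ D).
Proof. by move=> G0; rewrite ge0_integralE. Qed.

Section shifted_nnsfun.
Variables (c : R) (h : {nnsfun mT >-> R}).

Definition shift_fun : mT -> R := fun x => h (x + c)%R.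

Let shift_fun_measurable : measurable_fun setT shift_fun.
Proof.
exact: (measurableT_comp (measurable_funPT h) (measurable_fun_addr (D:=setT) c)).
Qed.

Let shift_fun_finite : finite_set (range shift_fun).
Proof. by apply: sub_finite_set (@fimfunP _ _ h) => _ [x _ <-]; exists (x + c)%R. Qed.

Let shift_fun_ge0 x : (0 <= shift_fun x)%R.
Proof. exact: fun_ge0. Qed.

HB.instance Definition _ := isMeasurableFun.Build _ _ _ _ shift_fun shift_fun_measurable.
HB.instance Definition _ := FiniteImage.Build _ _ shift_fun shift_fun_finite.
HB.instance Definition _ := isNonNegFun.Build _ _ shift_fun shift_fun_ge0.

Lemma sintegral_shift_fun : sintegral mu shift_fun = sintegral mu h.
Proof.
rewrite /sintegral; apply: eq_fsbigr => r _; congr (_ * _).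
apply: lebesgue_measure_shift.
by rewrite -[X in measurable X]setTI; exact: (measurable_funPT h).
Qed.

End shifted_nnsfun.

Lemma sup_sintegral_shift_le c G :
  sup_sintegral (fun x => G (x + c)%R) <= sup_sintegral G.
Proof.
apply: ge_ereal_sup => _ [h hG <-].
apply: ereal_sup_ubound; exists (shift_fun (- c) h : {nnsfun mT >-> R}).
  by move=> x /=; rewrite /shift_fun; have := hG (x - c)%R; rewrite subrK.
exact: sintegral_shift_fun.
Qed.

Lemma sup_sintegral_shift c G : sup_sintegral (fun x => G (x + c)%R) = sup_sintegral G.
Proof.
apply/le_anti; rewrite sup_sintegral_shift_le /=.
have := sup_sintegral_shift_le (- c) (fun y => G (y + c)%R).
by under eq_fun do rewrite subrK.
Qed.

Lemma nnsfun_le_patch_out (h : {nnsfun mT >-> R}) G D x :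
  (forall x, (h x)%:E <= (G \_ D) x) -> ~ D x -> h x = 0%R.
Proof.
move=> hG Dx; apply/eqP; rewrite eq_le fun_ge0 andbT -lee_fin.
by have := hG x; rewrite patchE memNset.
Qed.

Lemma sup_sintegral_ge0 G : (forall x, 0 <= G x) -> 0 <= sup_sintegral G.
Proof. by move=> G0; apply: ereal_sup_ubound; exists nnsfun0 => //; exact: sintegral0. Qed.

Lemma sup_sintegral_null_set G D : measurable D -> mu D = 0 ->
  (forall x, 0 <= G x) -> sup_sintegral (G \_ D) = 0.
Proof.
move=> mD D0 G0; apply/le_anti/andP; split; last first.
  by apply: sup_sintegral_ge0 => x; rewrite patchE; case: ifP.
apply: ge_ereal_sup => _ [h hG <-]; rewrite /sintegral fsbig1 // => r _.
have [->|r0] := eqVneq r 0%R; first by rewrite mul0e.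
suff -> : mu (h @^-1` [set r]) = 0 by rewrite mule0.
apply/eqP; rewrite eq_le measure_ge0 andbT -D0 le_measure ?inE //.
move=> x /= hx; apply: contrapT => Dx.
by move: r0; rewrite -hx (nnsfun_le_patch_out hG Dx) eqxx.
Qed.

Lemma sup_sintegral_setU G A B : measurable A -> measurable B -> A `&` B = set0 ->
  (forall x, 0 <= G x) ->
  sup_sintegral (G \_ (A `|` B)) = sup_sintegral (G \_ A) + sup_sintegral (G \_ B).
Proof.
move=> mA mB AB0 G0.
have nAB x : A x -> B x -> False by move=> Ax Bx; rewrite -[False]/(set0 x) -AB0.
apply/le_anti/andP; split.
- apply: ge_ereal_sup => _ [h hG <-].
  have restr C (mC : measurable C) : C `<=` A `|` B ->
      forall x, ((mul_nnsfun h (@indic_nnsfun _ mT R _ mC)) x)%:E <= (G \_ C) x.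
    move=> CAB x; rewrite /= /measurable_realfun.mindic indicE !patchE.
    have [Cx|nCx] := boolP (x \in C); last by rewrite mulr0.
    by rewrite mulr1; have := hG x; rewrite patchE mem_set //; apply: CAB; rewrite -inE.
  pose hA := mul_nnsfun h (@indic_nnsfun _ mT R _ mA).
  pose hB := mul_nnsfun h (@indic_nnsfun _ mT R _ mB).
  have -> : sintegral mu h = sintegral mu (add_nnsfun hA hB).
    apply: eq_sintegral => x; rewrite /= /measurable_realfun.mindic !indicE.
    have [Ax|nAx] := boolP (x \in A); have [Bx|nBx] := boolP (x \in B).
    + by exfalso; apply: (nAB x); rewrite -inE.
    + by rewrite mulr1 mulr0 addr0.
    + by rewrite mulr1 mulr0 add0r.
    + rewrite !mulr0 addr0; apply: (nnsfun_le_patch_out hG).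
      by move=> [Ax|Bx]; [move/negP: nAx|move/negP: nBx]; apply; rewrite inE.
  rewrite sintegralD; apply: leeD; apply: ereal_sup_ubound.
  + by exists hA => //; apply: restr => x; left.
  + by exists hB => //; apply: restr => x; right.
- apply: ereal_sup_adde_le => _ [h1 hG1 <-]; apply: adde_ereal_sup_le => _ [h2 hG2 <-].
  rewrite -sintegralD; apply: ereal_sup_ubound; exists (add_nnsfun h1 h2) => // x.
  rewrite /= patchE; case: (boolP (x \in A `|` B)) => [|nABx].
  + rewrite inE => -[Ax|Bx].
    * rewrite (nnsfun_le_patch_out hG2 (nAB x Ax)) addr0.
      by have := hG1 x; rewrite patchE mem_set.
    * rewrite (nnsfun_le_patch_out hG1 (nAB x^~ Bx)) add0r.
      by have := hG2 x; rewrite patchE mem_set.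
  + have [nAx nBx] : ~ A x /\ ~ B x.
      by split => Cx; move/negP: nABx; apply; rewrite inE; [left|right].
    by rewrite (nnsfun_le_patch_out hG1 nAx) (nnsfun_le_patch_out hG2 nBx) addr0.
Qed.

End integral_without_measurability.

Section lebesgue_integral_interval.
Context {R : realType}.
Local Notation mu := (@lebesgue_measure R).
Implicit Types (F G : R -> \bar R) (A B D : set R).

Lemma ge0_integral_setU_disjoint G A B : (forall x, 0 <= G x) ->
  measurable A -> measurable B -> A `&` B = set0 ->
  \int[mu]_(x in A `|` B) G x = \int[mu]_(x in A) G x + \int[mu]_(x in B) G x.
Proof.
move=> G0 mA mB AB0; have G0D D x : D x -> 0 <= G x by move=> _; exact: G0.
by rewrite !ge0_integral_sup_sintegral // sup_sintegral_setU.
Qed.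

Lemma integral_setU_disjoint F A B : measurable A -> measurable B -> A `&` B = set0 ->
  \int[mu]_(x in A `|` B) F x = \int[mu]_(x in A) F x + \int[mu]_(x in B) F x.
Proof.
move=> mA mB AB0.
rewrite [LHS]integralE [X in _ = X + _]integralE [X in _ = _ + X]integralE.
rewrite !ge0_integral_setU_disjoint //.
by rewrite oppeD ?ge0_adde_def ?inE ?integral_ge0 // addeACA.
Qed.

Lemma integral_null_set F D : measurable D -> mu D = 0 -> \int[mu]_(x in D) F x = 0.
Proof.
move=> mD D0; rewrite integralE !ge0_integral_sup_sintegral //.
by rewrite !sup_sintegral_null_set // ?oppe0 ?adde0.
Qed.

Lemma integral_shift F D (c : R) :
  \int[mu]_(s in [set s | D (s + c)%R]) F (s + c)%R = \int[mu]_(s in D) F s.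
Proof.
rewrite integralE [RHS]integralE !ge0_integral_sup_sintegral //.
by congr (_ - _); rewrite -[RHS](sup_sintegral_shift c); congr sup_sintegral;
  apply/funext => x; rewrite !patchE ?funeposE ?funenegE.
Qed.

Lemma integral_itv_cc_oc (b : R) (G : R -> \bar R) : (0 <= b)%R ->
  \int[mu]_(s in `[0%R, b]) G s = \int[mu]_(s in `]0%R, b]) G s.
Proof.
move=> b0.
have -> : `[0%R, b]%classic = [set 0%R] `|` `]0%R, b]%classic.
  apply/seteqP; split => s /=; rewrite !in_itv /=.
    move=> /andP[s0 sb]; have [->|ns] := eqVneq s 0%R; first by left.
    by right; rewrite sb andbT lt_neqAle eq_sym ns s0.
  by move=> [->|/andP[s0 sb]]; rewrite ?lexx ?b0 // (ltW s0) sb.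
rewrite integral_setU_disjoint //.
rewrite (@integral_null_set G [set 0%R]) ?add0e //.
- by rewrite -set_itv1 lebesgue_measure_itv /= lte_fin ltxx.
- by apply/seteqP; split => s // [/= ->]; rewrite in_itv /= ltxx.
Qed.

Lemma integral_itv_split (a b : R) (G : R -> \bar R) : (0 <= a)%R -> (0 <= b)%R ->
  \int[mu]_(s in `[0%R, (a + b)%R]) G s =
  \int[mu]_(s in `[0%R, a]) G s + \int[mu]_(s in `]0%R, b]) G (s + a)%R.
Proof.
move=> a0 b0.
have -> : `[0%R, (a + b)%R]%classic = `[0%R, a]%classic `|` `]a, (a + b)%R]%classic.
  apply/seteqP; split => s /=; rewrite !in_itv /=.
    by move=> /andP[s0 sab]; case: (leP s a) => sa; [left|right]; apply/andP.
  by move=> [/andP[s0 sa]|/andP[sa sab]]; apply/andP; split => //; lra.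
rewrite integral_setU_disjoint //; last first.
  by apply/seteqP; split => s // [] /=; rewrite !in_itv /= => /andP[_ sa] /andP[a_s _]; lra.
congr (_ + _); rewrite -(integral_shift _ _ a); congr (integral _ _ _).
by apply/seteqP; split => s /=; rewrite !in_itv /= => /andP[h1 h2]; apply/andP; split; lra.
Qed.

End lebesgue_integral_interval.

Definition concat_at {R : realType} (T : Type) (a : R) (g1 g2 : R -> T) : R -> T :=
  fun s => if (s <= a)%R then g1 s else g2 (s - a)%R.

Lemma min_max_sub_le {R : realType} (a s t : R) : (s <= t)%R ->
  (Num.min t a - Num.min s a <= t - s)%R /\ (Num.max t a - Num.max s a <= t - s)%R.
Proof.
move=> st; rewrite /Num.min /Num.max.
by case: ifPn => h1; case: ifPn => h2; rewrite -?leNgt in h1 h2; split; lra.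
Qed.

Section absolute_continuity.
Context {R : realType} {n : nat}.
Implicit Types (x y : R -> 'rV[R]_n).

Lemma abs_cont_on_comp (phi : R -> R) a b a' b' x :
  {homo phi : s t / (s <= t)%R} -> (forall s t, (s <= t)%R -> phi t - phi s <= t - s)%R ->
  (forall s, a' <= s <= b' -> a <= phi s <= b)%R ->
  abs_cont_on a b x -> abs_cont_on a' b' (x \o phi).
Proof.
move=> phi_homo phi_lip phi_itv xAC e e0; have [d d0 xd] := xAC e e0.
exists d => // K al bl itv disj lt_d.
apply: (xd K (phi \o al) (phi \o bl)) => /=.
- move=> k kK; have [al_ge [al_bl bl_le]] := itv k kK.
  have /andP[-> _] : (a <= phi (al k) <= b)%R.
    by apply: phi_itv; rewrite al_ge (le_trans al_bl bl_le).
  have /andP[_ ->] : (a <= phi (bl k) <= b)%R.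
    by apply: phi_itv; rewrite bl_le (le_trans al_ge al_bl).
  by split => //; split => //; exact: phi_homo.
- by move=> i j iK jK ij; have [] := disj i j iK jK ij; [left|right]; exact: phi_homo.
- apply: le_lt_trans lt_d; apply: ler_sum => k _.
  by apply: phi_lip; have [_ []] := itv k (ltn_ord k).
Qed.

Lemma abs_cont_onD a b x y :
  abs_cont_on a b x -> abs_cont_on a b y -> abs_cont_on a b (x \+ y)%R.
Proof.
move=> xAC yAC e e0; have e20 : (0 < e / 2)%R by rewrite divr_gt0.
have [dx dx0 xd] := xAC _ e20; have [dy dy0 yd] := yAC _ e20.
exists (Num.min dx dy); first by rewrite lt_min dx0 dy0.
move=> K al bl itv disj; rewrite lt_min => /andP[ltx lty]; rewrite [ltRHS]splitr.
apply: le_lt_trans (ltrD (xd K al bl itv disj ltx) (yd K al bl itv disj lty)).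
rewrite -big_split /=; apply: ler_sum => k _.
by rewrite opprD addrACA ler_normD.
Qed.

Lemma abs_cont_on_cst a b (v : 'rV[R]_n) : abs_cont_on a b (fun=> v).
Proof.
move=> e e0; exists 1%R => // K al bl _ _ _.
by under eq_bigr do rewrite subrr normr0; rewrite big1.
Qed.

Lemma abs_cont_on_concat a b x1 x2 : (0 <= a)%R -> (0 <= b)%R -> x2 0%R = x1 a ->
  abs_cont_on 0 a x1 -> abs_cont_on 0 b x2 -> abs_cont_on 0 (a + b) (concat_at a x1 x2).
Proof.
move=> a0 b0 x21 x1AC x2AC.
have -> : concat_at a x1 x2 = ((x1 \o Num.min^~ a) \+
    ((x2 \o fun s => Num.max s a - a) \+ fun=> - x1 a))%R.
  apply/funext => s; rewrite /concat_at /= /Num.min /Num.max.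
  case: (ltgtP s a) => [sa|sa|->]; rewrite ?lexx ?subrr ?x21 ?subrr ?addr0 //.
  by rewrite [RHS]addrC subrK.
apply: abs_cont_onD; last apply: abs_cont_onD; last exact: abs_cont_on_cst.
- apply: abs_cont_on_comp x1AC => [s t st|s t /(min_max_sub_le a)[]//|s /andP[s0 _]].
  + exact: le_min2.
  + by rewrite le_min s0 a0 ge_min lexx orbT.
- apply: abs_cont_on_comp x2AC => [s t st|s t /(min_max_sub_le a)[_]|s /andP[_ sab]].
  + by rewrite lerD2r le_max2.
  + by rewrite opprB addrA subrK.
  + by rewrite subr_ge0 le_max lexx orbT lerBlDl ge_max sab; lra.
Qed.

End absolute_continuity.

Section admissible_trajectories.
Context {R : realType} {n m : nat} (X : set 'rV[R]_n) (U : set 'rV[R]_m).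
Variable f : 'rV[R]_n -> 'rV[R]_m -> 'rV[R]_n.
Local Notation mu := (@lebesgue_measure R).

Lemma lebesgue_negligible_set1 (a : R) : mu.-negligible [set a].
Proof.
exists `[a, a]%classic; split => //.
- by rewrite lebesgue_measure_itv /= lte_fin ltxx.
- by move=> s /= ->; rewrite in_itv /= lexx.
Qed.

Lemma lebesgue_negligible_shift (A : set R) (c : R) :
  mu.-negligible A -> mu.-negligible [set s | A (s + c)%R].
Proof.
move=> [B [mB B0 AB]]; exists [set s | B (s + c)%R]; split.
- by have := measurable_fun_addr (D:=setT) c measurableT mB; rewrite setTI.
- by rewrite lebesgue_measure_shift.
- by move=> s /= /AB.
Qed.

Lemma ae_lebesgue_of_negligible (P : R -> Prop) (A : set R) :
  (forall s, ~ P s -> A s) -> mu.-negligible A -> {ae mu, forall s, P s}.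
Proof. by move=> PA; apply: negligibleS => s /PA. Qed.

Lemma is_derive_shift (V : normedModType R) (x : R -> V) (s c v : R) (d : V) :
  is_derive (s + c)%R v x d -> is_derive s v (fun r => x (r + c)%R) d.
Proof.
move=> [x_derivable x_derive].
have E : (fun h : R => h^-1 *: (((fun r => x (r + c)%R) \o shift s) (h *: v) - x (s + c)%R))
    = (fun h : R => h^-1 *: ((x \o shift (s + c)%R) (h *: v) - x (s + c)%R)).
  by apply/funext => h /=; rewrite addrA.
by split; rewrite /derivable /derive E.
Qed.

Lemma in_itv0P (s t : R) : `[0%R, t]%classic s <-> (0 <= s /\ s <= t)%R.
Proof. by rewrite /= in_itv /=; split => [/andP[-> ->]|[-> ->]]. Qed.

Lemma admissible_restrict t T x0 u x : (t <= T)%R ->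
  admissible X U f T x0 u x -> admissible X U f t x0 u x.
Proof.
move=> tT [uU [um [xX [xAC [xder x0E]]]]].
have sub : `[0%R, t]%classic `<=` `[0%R, T]%classic.
  by move=> s /in_itv0P [s0 st]; apply/in_itv0P; split => //; exact: le_trans tT.
split; [|split; [|split; [|split; [|split]]]] => //.
- by move=> s /sub /uU.
- by move=> i; apply: measurable_funS (um i).
- by move=> s /sub /xX.
- by apply: (abs_cont_on_comp (phi:=id)) xAC => // s /andP[-> /le_trans->].
- by apply: negligibleS xder => s /= nP Px; apply: nP => /sub.
Qed.

Lemma admissible_tail a b x0 u x : (0 <= a)%R ->
  admissible X U f (a + b) x0 u x ->
  admissible X U f b (x a) (fun s => u (s + a)%R) (fun s => x (s + a)%R).
Proof.
move=> a0 [uU [um [xX [xAC [xder _]]]]].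
have in_shift s : `[0%R, b]%classic s -> `[0%R, (a + b)%R]%classic (s + a)%R.
  by move=> /in_itv0P [s0 sb]; apply/in_itv0P; split; lra.
split; [|split; [|split; [|split; [|split]]]].
- by move=> s /in_shift /uU.
- move=> i; apply: (@measurable_comp _ _ _ _ _ _ `[0%R, (a + b)%R]%classic
    (fun s => u s ord0 i) _ (fun s : R => s + a)%R) => //.
  + by move=> _ [s /in_shift sab <-].
  + exact: measurable_fun_addr.
- by move=> s /in_shift /xX.
- apply: (abs_cont_on_comp (phi := fun s => s + a)%R) xAC => [s t|s t st|s /andP[s0 sb]].
  + by rewrite lerD2r.
  + by rewrite opprD addrACA subrr addr0.
  + by apply/andP; split; lra.
- apply: ae_lebesgue_of_negligible (lebesgue_negligible_shift a xder) => s nP /= P.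
  by apply: nP => /in_shift /P; exact: is_derive_shift.
- by rewrite add0r.
Qed.

Lemma ae_is_derive_concat (V : normedModType R) (a b : R) (x1 x2 d1 d2 : R -> V) :
  {ae mu, forall s, `[0%R, a]%classic s -> is_derive s 1%R x1 (d1 s)} ->
  {ae mu, forall s, `[0%R, b]%classic s -> is_derive s 1%R x2 (d2 s)} ->
  {ae mu, forall s, `[0%R, (a + b)%R]%classic s ->
    is_derive s 1%R (concat_at a x1 x2) (concat_at a d1 d2 s)}.
Proof.
move=> x1der x2der.
have N12 := negligibleU (negligibleU x1der (lebesgue_negligible_shift (- a) x2der))
  (lebesgue_negligible_set1 a).
apply: ae_lebesgue_of_negligible N12 => s nP.
have [sa|sa|->] := ltgtP s a; [left; left|left; right|by right] => /= P; apply: nP;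
  move=> /in_itv0P[s0 sab]; rewrite /concat_at.
- rewrite (ltW sa); apply: near_eq_is_derive (P _).
    by near=> r; rewrite ifT //; near: r; apply: filterS (lt_nbhsl sa) => r /ltW.
  by apply/in_itv0P; split => //; exact: ltW.
- rewrite leNgt sa /=; apply: near_eq_is_derive (is_derive_shift (P _)).
  + near=> r; rewrite ifF //; near: r.
    by apply: filterS (lt_nbhsr sa) => r; rewrite leNgt => ->.
  + by apply/in_itv0P; split; lra.
Unshelve. all: by end_near.
Qed.

Lemma admissible_concat a b x0 u1 u2 x1 x2 : (0 < a)%R -> (0 <= b)%R ->
  admissible X U f a x0 u1 x1 -> admissible X U f b (x1 a) u2 x2 ->
  admissible X U f (a + b) x0 (concat_at a u1 u2) (concat_at a x1 x2).
Proof.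
move=> a0 b0 [u1U [u1m [x1X [x1AC [x1der x10]]]]] [u2U [u2m [x2X [x2AC [x2der x20]]]]].
have split_itv s : `[0%R, (a + b)%R]%classic s ->
    if (s <= a)%R then `[0%R, a]%classic s else `[0%R, b]%classic (s - a)%R.
  move=> /in_itv0P[s0 sab]; case: ifPn => sa; apply/in_itv0P; first by [].
  by rewrite -ltNge in sa; split; lra.
split; [|split; [|split; [|split; [|split]]]].
- by move=> s /split_itv; rewrite /concat_at; case: ifP => _; [exact: u1U|exact: u2U].
- move=> i; rewrite /concat_at.
  have -> : (fun s => (if (s <= a)%R then u1 s else u2 (s - a)%R) ord0 i) =
      (fun s => if (s <= a)%R then u1 s ord0 i else u2 (s - a)%R ord0 i).
    by apply/funext => s; case: ifP.
  apply: measurable_fun_if => //.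
  + apply: measurable_realfun.measurable_fun_ler => //; exact: measurable_id.
  + by apply: measurable_funS (u1m i) => // s [/in_itv0P[s0 _] /= sa]; apply/in_itv0P.
  + apply: (@measurable_comp _ _ _ _ _ _ `[0%R, b]%classic
      (fun s => u2 s ord0 i) _ (fun s : R => s - a)%R) => //.
    * move=> _ [s [/in_itv0P[s0 sab]] /= /negbT sa <-]; rewrite -ltNge in sa.
      by apply/in_itv0P; split; lra.
    * exact: measurable_fun_addr.
- by move=> s /split_itv; rewrite /concat_at; case: ifP => _; [exact: x1X|exact: x2X].
- by apply: abs_cont_on_concat => //; exact: ltW.
- apply: ae_lebesgue_of_negligible (ae_is_derive_concat x1der x2der) => s nP /= P.
  by apply: nP => /P; rewrite /concat_at; case: ifP.
- by rewrite /concat_at (ltW a0).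
Qed.

End admissible_trajectories.

Section dynamic_programming.
Context {R : realType} {n m : nat} (X : set 'rV[R]_n) (U : set 'rV[R]_m).
Variables (l : 'rV[R]_n -> 'rV[R]_m -> R) (f : 'rV[R]_n -> 'rV[R]_m -> 'rV[R]_n).
Local Notation mu := (@lebesgue_measure R).
Local Notation S := (Sop X U l f).

Lemma Sop0 g x0 : U !=set0 -> X x0 -> S 0%R g x0 = g x0.
Proof.
move=> [u0 Uu0] Xx0.
have int0 (F : R -> \bar R) : \int[mu]_(s in `[0%R, 0%R]) F s = 0.
  by apply: integral_null_set => //; rewrite lebesgue_measure_itv /= lte_fin ltxx.
apply/le_anti/andP; split.
- apply: ge_ereal_sup => _ [[u x] [_ [_ [_ [_ [_ /= ->]]]]] <-].
  by rewrite int0 add0e.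
- apply: ereal_sup_ubound; exists (fun=> u0, fun=> x0); last by rewrite int0 add0e.
  split; [|split; [|split; [|split; [|split]]]] => //.
  + exact: abs_cont_on_cst.
  + apply: ae_lebesgue_of_negligible (lebesgue_negligible_set1 0%R) => s nP.
    apply: contrapT => s0; apply: nP => /in_itv0P[s_ge0 s_le0].
    by case: s0; apply/le_anti; rewrite s_ge0 s_le0.
Qed.

Lemma Sop_add a b g : (0 < a)%R -> (0 <= b)%R -> S a (S b g) = S (a + b)%R g.
Proof.
move=> a0 b0; apply/funext => x0; apply/le_anti/andP; split.
- apply: ge_ereal_sup => _ [[u1 x1] adm1 <-] /=.
  apply: adde_ereal_sup_le => _ [[u2 x2] adm2 <-] /=.
  apply: ereal_sup_ubound; exists (concat_at a u1 u2, concat_at a x1 x2).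
    exact: admissible_concat.
  rewrite /= integral_itv_split ?(ltW a0) // -addeA; congr (_ + _).
    apply: eq_integral => s; rewrite inE /= in_itv /= => /andP[_ sa].
    by rewrite /concat_at sa.
  congr (_ + _).
    rewrite integral_itv_cc_oc //; apply: eq_integral => s.
    rewrite inE /= in_itv /= => /andP[s0 _].
    by rewrite /concat_at leNgt ltrDr s0 /= addrK.
  rewrite /concat_at; case: ifPn => [abl|]; last by rewrite addrC addrK.
  have -> : b = 0%R by apply/le_anti; rewrite b0 andbT -(lerD2l a) addr0.
  by rewrite addr0; case: adm2 => _ [_ [_ [_ [_ /= ->]]]].
- apply: ge_ereal_sup => _ [[u x] adm <-] /=.
  rewrite integral_itv_split ?(ltW a0) // -addeA.
  apply: le_trans (_ : _ <= \int[mu]_(s in `[0%R, a]) (l (x s) (u s))%:E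
                         + S b g (x a)) _.
    apply: leeD2l; apply: ereal_sup_ubound.
    exists (fun s => u (s + a)%R, fun s => x (s + a)%R).
      exact: admissible_tail (ltW a0) adm.
    by rewrite /= integral_itv_cc_oc // (addrC b a).
  apply: ereal_sup_ubound; exists (u, x) => //.
  by apply: admissible_restrict adm; rewrite lerDl.
Qed.

End dynamic_programming.

(* S^0 g agrees with g on X only when some control exists. *)
Lemma sup_dist_Sop_PW {R : realType} {n m p : nat} (X : set 'rV[R]_n) (U : set 'rV[R]_m)
    (l : 'rV[R]_n -> 'rV[R]_m -> R) (f : 'rV[R]_n -> 'rV[R]_m -> 'rV[R]_n)
    (w : 'I_p -> 'rV[R]_n -> \bar R) t g : (0 <= t)%R ->
  sup_dist X (Sop X U l f t (PW X w g)) (Sop X U l f t g) <=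
  sup_dist X (PW X w (Sop X U l f 0 g)) (Sop X U l f 0 g).
Proof.
move=> t0; have [U0|/set0P Un0] := eqVneq U set0.
  apply: le_trans (sup_dist_ge0 _ _ _) => //; apply: sup_dist_le => //.
  by split=> x _; rewrite !Sop_no_control // adde0.
have S0g : {in X, Sop X U l f 0 g =1 g} by move=> x; rewrite inE => Xx; exact: Sop0.
rewrite (eq_PW w S0g) [Y in _ <= Y](@eq_sup_dist _ _ X _ (PW X w g) _ g) //.
by apply: sup_dist_nonexpansive; exact: Sop_nonexpansive.
Qed.

Theorem lemma5p2 (R : realType) (n m p q : nat)
  (X : set 'rV[R]_n) (U : set 'rV[R]_m)
  (l : 'rV[R]_n -> 'rV[R]_m -> R) (f : 'rV[R]_n -> 'rV[R]_m -> 'rV[R]_n)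
  (T : R) (phi : 'rV[R]_n -> \bar R)
  (w : 'I_p -> 'rV[R]_n -> \bar R) (z : 'I_q -> 'rV[R]_n -> \bar R)
  (N : nat) :
  (0 < T)%R ->
  (forall x, X x -> phi x != +oo) ->
  (forall i x, X x -> w i x != +oo) ->
  (forall j x, X x -> z j x != +oo) ->
  (1 <= N)%N ->
  let delta := (T / N%:R)%R in
  let v := fun t : R => Sop X U l f t phi in
  let vhT := Wmap w (mpfem_lambda X U l f delta phi w z N) in
  sup_dist X vhT (v T) <=
    sup_dist X (PW X w (v 0%R)) (v 0%R)
    + \sum_(1 <= k < N.+1) sup_dist X (PW X w (PmZ X z (v (k%:R * delta)%R))) (v (k%:R * delta)%R).
Proof.
move=> T0 _ _ _ N1; cbv zeta; set delta := (T / N%:R)%R.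
have d0 : (0 < delta)%R by rewrite divr_gt0 // ltr0n.
pose S := Sop X U l f delta.
pose P g := PW X w (PmZ X z g).
pose vh k := Wmap w (mpfem_lambda X U l f delta phi w z k).
pose vk k := Sop X U l f (k%:R * delta)%R phi.
pose eps k := sup_dist X (P (vk k)) (vk k).
pose eps0 := sup_dist X (PW X w (Sop X U l f 0 phi)) (Sop X U l f 0 phi).
have vkS k : vk k.+1 = S (vk k).
  rewrite /vk /S Sop_add //; last by rewrite mulr_ge0 // ltW.
  by rewrite -[in LHS](addn1 k) natrD mulrDl mul1r addrC.
have err k : sup_dist X (vh k.+1) (vk k.+1) <= sup_dist X (S (vh k)) (S (vk k)) + eps k.+1.
  rewrite /vh mpfem_lambda_succ -/(vh k) -/(P _) vkS -/S.
  apply: le_trans (sup_dist_triangle _ _ (P (S (vk k))) _) _.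
  rewrite /eps vkS; apply: leeD2r.
  by apply: sup_dist_nonexpansive; exact: PW_PmZ_nonexpansive.
have acc k : sup_dist X (S (vh k)) (S (vk k)) <= eps0 + \sum_(1 <= j < k.+1) eps j.
  elim: k => [|k IH].
    by rewrite big_geq // adde0 /vk mul0r /S Sop_add // addr0 sup_dist_Sop_PW // ltW.
  apply: le_trans (_ : _ <= sup_dist X (vh k.+1) (vk k.+1)) _.
    by apply: sup_dist_nonexpansive; exact: Sop_nonexpansive (ltW d0).
  by apply: le_trans (err k) _; rewrite big_nat_recr //= addeA leeD2r.
have vT : Sop X U l f T phi = vk N by rewrite /vk /delta mulrC divfK // pnatr_eq0 -lt0n.
rewrite vT -/(vh N) -/eps0 big_nat_recr //= addeA -(prednK N1).
by apply: le_trans (err N.-1) _; rewrite leeD2r // acc.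
Qed.
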